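(* Let $(\alpha_1,\alpha_2,\alpha_3)\in[0,1]^3$ with $\alpha_1\ge\alpha_2\ge\alpha_3$. If any of the following holds, then $(\alpha_1,\alpha_2,\alpha_3)$ is not a forcing triple: (a) $\alpha_1<\frac{1+\tau^2}{2}=\frac{52-4\sqrt7}{81}$; (b) $\alpha_2<\frac14$; (c) $\alpha_1+\alpha_2<1$; (d) $\alpha_1=x^2+y^2$ and $\alpha_2=x^2+(1-x-y)^2$ for some nonnegative reals $x,y$ with $x+y\le1$ and $2x^2+(1-x-y)^2<1$.
   Context: $\tau=\frac{4-\sqrt7}{9}$. A $3$-colouring template on an $n$-set $V$ is a triple $(G_1,G_2,G_3)$ of graphs on $V$ (edge sets may overlap). A rainbow triangle is a triple of distinct vertices whose three pairs lie in the three distinct colour classes, one pair per class. A triple $(\alpha_1,\alpha_2,\alpha_3)\in[0,1]^3$ is a forcing triple if for all sufficiently large $n$, every $n$-vertex $3$-colouring template with $|E(G_i)|>\min(\frac{\alpha_i}{2}n^2,\binom n2-1)$ for each $i$ contains a rainbow triangle. *)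

From HB Require Import structures.
From mathcomp Require Import all_boot all_order all_algebra.
From mathcomp Require Import reals.
Set Implicit Arguments. Unset Strict Implicit. Unset Printing Implicit Defensive.
Import Order.TTheory GRing.Theory Num.Theory.
Local Open Scope ring_scope.

Definition graph (n : nat) := {set {set 'I_n}}.

Definition is_graph (n : nat) (G : graph n) : Prop :=
  forall e, e \in G -> #|e| = 2%N.

(* A 3-colouring template on 'I_n is a triple (G1,G2,G3) of graphs
   (edge sets may overlap). *)
Definition is_template (n : nat) (G1 G2 G3 : graph n) : Prop :=
  is_graph G1 /\ is_graph G2 /\ is_graph G3.

(* Since u,v,w range over
   all ordered triples, this covers every bijection pairs -> classes. *)
Definition has_rainbow_triangle (n : nat) (G1 G2 G3 : graph n) : Prop :=
  exists u v w : 'I_n,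
    [/\ u != v, v != w, u != w &
      [/\ [set u; v] \in G1, [set v; w] \in G2 & [set u; w] \in G3]].

Definition forcing_triple (R : realType) (a1 a2 a3 : R) : Prop :=
  exists N : nat, forall n : nat, (N <= n)%N ->
    forall G1 G2 G3 : graph n, is_template G1 G2 G3 ->
      (#|G1|%:R > Num.min (a1 / 2 * n%:R ^+ 2) ('C(n, 2)%:R - 1)) ->
      (#|G2|%:R > Num.min (a2 / 2 * n%:R ^+ 2) ('C(n, 2)%:R - 1)) ->
      (#|G3|%:R > Num.min (a3 / 2 * n%:R ^+ 2) ('C(n, 2)%:R - 1)) ->
      has_rainbow_triangle G1 G2 G3.

Definition tau (R : realType) : R := (4 - Num.sqrt 7) / 9.

From HB Require Import structures.
From mathcomp Require Import all_boot all_order all_algebra.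
From mathcomp Require Import reals.
From mathcomp Require Import zify ring lra.

(* Split the vertices into parts X, Y, Z of sizes xn, yn, zn and a remainder,
   and colour with the cliques on X and Y, the cliques on X and Z, and all
   pairs not inside X.  In a would-be rainbow triangle uvw the first pair uv
   lies inside X or inside Y; inside Y, v is in neither X nor Z, so vw cannot
   have the second colour; inside X, vw must lie inside X, so uw lies inside X
   and lacks the third colour.  The colour densities are x^2 + y^2, x^2 + z^2
   and 1 - x^2, so each alternative of the theorem is covered by a choice of
   (x, y, z), possibly after reversing the colours: (1 - 2 tau, tau, tau),
   (0, 1/2, 1/2), (sqrt ((1 + a2 - a1) / 2), 0, 0), and on the boundary curve
   a small move of (x, y, z) towards (1, 0, 0).  That move strictly increases the first two
   densities because a1 + a2 >= 1 forces x >= 2 (y + z), while the slack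
   2 x^2 + z^2 < 1 keeps 1 - x^2 above a2 >= a3. *)

Set Implicit Arguments.
Unset Strict Implicit.
Unset Printing Implicit Defensive.
Import Order.TTheory GRing.Theory Num.Theory.
Local Open Scope ring_scope.

Section Cliques.
Variable n : nat.
Implicit Types A B : {set 'I_n}.

Definition clique A : graph n :=
  [set e : {set 'I_n} | (e \subset A) && (#|e| == 2%N)].

Definition coclique A : graph n := clique setT :\: clique A.

Lemma card_clique_edge A e : e \in clique A -> #|e| = 2%N.
Proof. by rewrite inE => /andP[_ /eqP]. Qed.

Lemma card_clique A : #|clique A| = 'C(#|A|, 2).
Proof. by rewrite -cards_draws. Qed.

Lemma mem_clique2 A u v : u != v ->
  ([set u; v] \in clique A) = (u \in A) && (v \in A).
Proof. by move=> uv; rewrite inE cards2 uv subUset !sub1set andbT. Qed.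

Lemma cliqueI A B : clique A :&: clique B = clique (A :&: B).
Proof. by apply/setP => e; rewrite !inE subsetI andbACA andbb. Qed.

Lemma cliqueS A B : A \subset B -> clique A \subset clique B.
Proof.
move=> AB; apply/subsetP => e; rewrite !inE => /andP[eA ->].
by rewrite (subset_trans eA AB).
Qed.

Lemma card_cliqueU A B : [disjoint A & B] ->
  #|clique A :|: clique B| = ('C(#|A|, 2) + 'C(#|B|, 2))%N.
Proof.
by move=> dAB; rewrite cardsU cliqueI (disjoint_setI0 dAB) !card_clique cards0 subn0.
Qed.

Lemma card_coclique A : (#|coclique A| + 'C(#|A|, 2))%N = 'C(n, 2).
Proof.
have sub : clique A \subset clique setT by exact/cliqueS/subsetT.
rewrite cardsDS // -card_clique subnK ?subset_leq_card //.
by rewrite card_clique cardsT card_ord.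
Qed.

End Cliques.

Section CliqueTemplate.
Variables (n : nat) (X Y Z : {set 'I_n}).

Lemma clique_template :
  is_template (clique X :|: clique Y) (clique X :|: clique Z) (coclique X).
Proof.
by split; [|split] => e; [case/setUP | case/setUP | case/setDP => + _];
  apply: card_clique_edge.
Qed.

Lemma clique_template_no_rainbow :
  [disjoint X & Y] -> [disjoint X & Z] -> [disjoint Y & Z] ->
  ~ has_rainbow_triangle (clique X :|: clique Y) (clique X :|: clique Z) (coclique X).
Proof.
move=> dXY dXZ dYZ [u [v [w [uv vw uw [h1 h2 h3]]]]].
move: h1 h2 h3; rewrite /coclique !in_setU in_setD !mem_clique2 // !inE /=.
case/orP => [/andP[uX vX] | /andP[_ vY]].
- by rewrite (disjointFr dXZ vX) vX uX orbF andbT => ->.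
- by rewrite (disjointFl dXY vY) (disjointFr dYZ vY).
Qed.

End CliqueTemplate.

Definition ord_range n (m k : nat) : {set 'I_n} := [set i : 'I_n | m <= i < m + k]%N.

Lemma card_ord_range n m k : (m + k <= n)%N -> #|ord_range n m k| = k.
Proof.
elim: k => [|k IHk] mkn.
  by apply/eqP; rewrite cards_eq0; apply/eqP/setP => i; rewrite !inE; lia.
have last_lt : (m + k < n)%N by lia.
have -> : ord_range n m k.+1 = ord_range n m k :|: [set Ordinal last_lt].
  by apply/setP => i; rewrite !inE -val_eqE /=; lia.
rewrite cardsU IHk ?cards1; last lia.
suff -> : ord_range n m k :&: [set Ordinal last_lt] = set0 by rewrite cards0 subn0 addn1.
by apply/setP => i; rewrite !inE -val_eqE /=; lia.
Qed.

Lemma disjoint_ord_range n m1 k1 m2 k2 : (m1 + k1 <= m2)%N ->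
  [disjoint ord_range n m1 k1 & ord_range n m2 k2].
Proof.
by move=> le12; rewrite -setI_eq0; apply/eqP/setP => i; rewrite !inE; lia.
Qed.

Section Counting.
Variable R : realType.

Lemma forcing_triple_rev (a1 a2 a3 : R) :
  forcing_triple a1 a2 a3 -> forcing_triple a3 a2 a1.
Proof.
move=> [N forcing]; exists N => n Nn G1 G2 G3 [g1 [g2 g3]] e1 e2 e3.
have [u [v [w [uv vw uw [h3 h2 h1]]]]] := forcing n Nn G3 G2 G1 (conj g3 (conj g2 g1)) e3 e2 e1.
exists u, w, v; split => //; first by rewrite eq_sym.
by split; rewrite // setUC.
Qed.

Lemma bin2_natr (p : nat) : 'C(p, 2)%:R * 2 = p%:R * (p%:R - 1) :> R.
Proof.
elim: p => [|p IHp]; first by rewrite bin0n !mul0r.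
by rewrite binS bin1 natrD mulrDl IHp -natr1; ring.
Qed.

Lemma bin2_truncn_ge (s : R) : 0 <= s -> s ^+ 2 - 3 * s <= 'C(Num.truncn s, 2)%:R * 2.
Proof.
move=> s0; rewrite bin2_natr; have /andP[le_s] := truncn_itv s0.
rewrite -natr1 => lt_s; set P := (Num.truncn s)%:R in le_s lt_s *.
have : 0 <= s * (P + 1 - s) by rewrite mulr_ge0 // subr_ge0 ltW.
nra.
Qed.

Lemma bin2_truncn_le (s : R) : 0 <= s -> 'C(Num.truncn s, 2)%:R * 2 <= s ^+ 2.
Proof.
move=> s0; rewrite bin2_natr; have /andP[le_s _] := truncn_itv s0.
by have := ler0n R (Num.truncn s); nra.
Qed.

Lemma truncn_sum3_le (x y z : R) (n : nat) : 0 <= x -> 0 <= y -> 0 <= z ->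
  x + y + z <= 1 ->
  (Num.truncn (x * n%:R) + Num.truncn (y * n%:R) + Num.truncn (z * n%:R) <= n)%N.
Proof.
move=> x0 y0 z0 xyz; have n0 := ler0n R n.
have /andP[px _] := truncn_itv (mulr_ge0 x0 n0).
have /andP[py _] := truncn_itv (mulr_ge0 y0 n0).
have /andP[pz _] := truncn_itv (mulr_ge0 z0 n0).
rewrite -(ler_nat R) !natrD.
have : (x + y + z) * n%:R <= n%:R by rewrite -[leRHS]mul1r ler_wpM2r.
lra.
Qed.

Lemma eventually_lt_mulr (c d : R) : 0 < d ->
  exists N : nat, forall n : nat, (N <= n)%N -> c < n%:R * d.
Proof.
move=> d0; exists (Num.bound `|c / d|) => n Nn.
rewrite -ltr_pdivrMr //; apply: le_lt_trans (ler_norm _) _.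
apply: lt_le_trans (archi_boundP (normr_ge0 _)) _.
by rewrite ler_nat.
Qed.

Definition exceeds (a : R) (n m : nat) : Prop :=
  Num.min (a / 2 * n%:R ^+ 2) ('C(n, 2)%:R - 1) < m%:R.

Lemma exceeds_clique_pair (x y a : R) :
  0 <= x -> 0 <= y -> x + y <= 1 -> a < x ^+ 2 + y ^+ 2 ->
  exists N : nat, forall n : nat, (N <= n)%N ->
    exceeds a n ('C(Num.truncn (x * n%:R), 2) + 'C(Num.truncn (y * n%:R), 2)).
Proof.
move=> x0 y0 xy ha; have [|N large] := @eventually_lt_mulr 3 (x ^+ 2 + y ^+ 2 - a).
  by rewrite subr_gt0.
exists N => n /large gap; rewrite /exceeds gt_min natrD; apply/orP; left.
have n0 := ler0n R n.
have := bin2_truncn_ge (mulr_ge0 x0 n0); have := bin2_truncn_ge (mulr_ge0 y0 n0).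
have : (x + y) * n%:R <= n%:R by rewrite -[leRHS]mul1r ler_wpM2r.
have : 0 < n%:R * (n%:R * (x ^+ 2 + y ^+ 2 - a) - 3).
  by apply: mulr_gt0; [nra | lra].
lra.
Qed.

(* The second alternative uses the [C(n, 2) - 1] threshold: when [x = 0] the class is complete. *)
Lemma exceeds_coclique (x a : R) : 0 <= x -> x = 0 \/ a < 1 - x ^+ 2 ->
  exists N : nat, forall n m : nat, (N <= n)%N ->
    (m + 'C(Num.truncn (x * n%:R), 2))%N = 'C(n, 2) -> exceeds a n m.
Proof.
move=> x0 [->|ha].
  exists 0%N => n m _; rewrite mul0r truncn0 bin0n addn0 => ->.
  by rewrite /exceeds gt_min ltrBlDr ltrDl ltr01 orbT.
have [|N large] := @eventually_lt_mulr 1 (1 - x ^+ 2 - a); first lra.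
exists N => n m /large gap /(congr1 (fun k => k%:R : R)); rewrite natrD => count.
rewrite /exceeds gt_min; apply/orP; left.
have n0 := ler0n R n.
have := bin2_truncn_le (mulr_ge0 x0 n0); have := bin2_natr n.
have : 0 < n%:R * (n%:R * (1 - x ^+ 2 - a) - 1) by apply: mulr_gt0; [nra | lra].
lra.
Qed.

Lemma not_forcing_clique_template (x y z a1 a2 a3 : R) :
  0 <= x -> 0 <= y -> 0 <= z -> x + y + z <= 1 ->
  a1 < x ^+ 2 + y ^+ 2 -> a2 < x ^+ 2 + z ^+ 2 -> x = 0 \/ a3 < 1 - x ^+ 2 ->
  ~ forcing_triple a1 a2 a3.
Proof.
move=> x0 y0 z0 xyz ha1 ha2 ha3 [N0 forcing].
have [N1 large1] := exceeds_clique_pair x0 y0 (ltac:(lra) : x + y <= 1) ha1.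
have [N2 large2] := exceeds_clique_pair x0 z0 (ltac:(lra) : x + z <= 1) ha2.
have [N3 large3] := exceeds_coclique x0 ha3.
pose n := maxn N0 (maxn N1 (maxn N2 N3)).
pose p := Num.truncn (x * n%:R); pose q := Num.truncn (y * n%:R).
pose r := Num.truncn (z * n%:R).
have pqr : (p + q + r <= n)%N by exact: truncn_sum3_le.
pose X := ord_range n 0 p; pose Y := ord_range n p q; pose Z := ord_range n (p + q) r.
have [cX cY cZ] : [/\ #|X| = p, #|Y| = q & #|Z| = r].
  by split; apply: card_ord_range; lia.
apply: (@clique_template_no_rainbow n X Y Z); try by apply: disjoint_ord_range; lia.
apply: (forcing n _ _ _ _ (clique_template X Y Z)).
- by rewrite leq_max leqnn.
- by rewrite card_cliqueU ?cX ?cY; [apply: large1; lia | apply: disjoint_ord_range; lia].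
- by rewrite card_cliqueU ?cX ?cZ; [apply: large2; lia | apply: disjoint_ord_range; lia].
- by have := card_coclique X; rewrite cX; apply: large3; lia.
Qed.

End Counting.

Section Perturbation.
Variable R : realType.
Implicit Types x y z t : R.

Lemma two_parts_le_dominant x y z :
  0 <= x -> 0 <= y -> 0 <= z -> x + y + z = 1 -> 2 * x ^+ 2 + z ^+ 2 < 1 ->
  1 / 4 <= x ^+ 2 + z ^+ 2 -> 1 <= (x ^+ 2 + y ^+ 2) + (x ^+ 2 + z ^+ 2) ->
  2 * (y + z) <= x.
Proof.
move=> x0 y0 z0 xyz small quarter big.
have cross : 2 * (x * y + y * z + z * x) <= x ^+ 2.
  have sq : (x + y + z) ^+ 2 = 1 by rewrite xyz expr1n.
  lra.
have [x_gt0|] := ltP 0 x.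
  rewrite -(ler_pM2l x_gt0); have := mulr_ge0 y0 z0; lra.
move=> x_le0; have x_eq0 : x = 0 by lra.
rewrite x_eq0 in xyz small quarter cross; nra.
Qed.

Lemma two_parts_gain x y z t : 0 <= y -> 0 <= z -> x + y + z = 1 -> 2 * (y + z) <= x ->
  x < 1 -> 0 < t -> x ^+ 2 + y ^+ 2 < (x + t * (1 - x)) ^+ 2 + ((1 - t) * y) ^+ 2.
Proof.
move=> y0 z0 xyz dom x_lt1 t_gt0.
have y_small : y ^+ 2 <= x * (1 - x) by nra.
have : 0 < t ^+ 2 * (1 - x) ^+ 2 by rewrite mulr_gt0 // exprn_gt0 // subr_gt0.
nra.
Qed.

Lemma sqr_shift_lt x t : 0 <= x <= 1 -> 0 < t <= 1 -> (x + t * (1 - x)) ^+ 2 < x ^+ 2 + 4 * t.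
Proof.
move=> /andP[x0 x1] /andP[t0 t1].
have : t * (x * (1 - x)) <= t by rewrite ler_piMr ?mulr_ge0 ?subr_ge0 //; nra.
have : t * (t * (1 - x) ^+ 2) <= t by rewrite ler_piMr ?mulr_ge0 ?sqr_ge0 //; nra.
nra.
Qed.

Lemma perturb_dominant x y z : 0 <= y -> 0 <= z -> x + y + z = 1 ->
  2 * x ^+ 2 + z ^+ 2 < 1 -> 2 * (y + z) <= x ->
  exists x' y' z' : R, [/\ 0 <= x', 0 <= y', 0 <= z', x' + y' + z' <= 1 &
    [/\ x ^+ 2 + y ^+ 2 < x' ^+ 2 + y' ^+ 2, x ^+ 2 + z ^+ 2 < x' ^+ 2 + z' ^+ 2
      & x ^+ 2 + z ^+ 2 < 1 - x' ^+ 2]].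
Proof.
move=> y0 z0 xyz small dom.
have x_lt1 : x < 1 by nra.
pose t := (1 - 2 * x ^+ 2 - z ^+ 2) / 4.
have t_gt0 : 0 < t by rewrite divr_gt0 //; lra.
have t_le1 : t <= 1 by rewrite ler_pdivrMr //; nra.
exists (x + t * (1 - x)), ((1 - t) * y), ((1 - t) * z); split.
- nra.
- by rewrite mulr_ge0 // subr_ge0.
- by rewrite mulr_ge0 // subr_ge0.
- have : t * (x + y + z) = t by rewrite xyz mulr1.
  lra.
split.
- exact: two_parts_gain dom x_lt1 t_gt0.
- by apply: (@two_parts_gain x z y) => //; lra.
- have : (x + t * (1 - x)) ^+ 2 < x ^+ 2 + 4 * t.
    by apply: sqr_shift_lt; apply/andP; split; lra.
  rewrite /t; lra.
Qed.

End Perturbation.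

Section Alternatives.
Variable R : realType.
Implicit Types a x y : R.

Lemma tau_spec : [/\ 0 < tau R, tau R < 1 / 2 & 9 * tau R ^+ 2 - 8 * tau R + 1 = 0].
Proof.
have s0 : 0 <= Num.sqrt 7 :> R := sqrtr_ge0 _.
have s2 : Num.sqrt 7 ^+ 2 = 7 :> R by rewrite sqr_sqrtr // ler0n.
have s4 : Num.sqrt 7 < 4 :> R by nra.
by rewrite /tau; split; lra.
Qed.

(* With [x = 1 - 2 tau] and [y = z = tau], the equation of [tau] makes
   [x^2 + y^2] and [1 - x^2] both equal to [(1 + tau^2) / 2]. *)
Lemma not_forcing_small_a1 a1 a2 a3 : a3 <= a2 <= a1 ->
  a1 < (1 + tau R ^+ 2) / 2 -> ~ forcing_triple a1 a2 a3.
Proof.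
move=> /andP[a32 a21] small; have [t_gt0 t_lt_half t_root] := tau_spec.
by apply: (@not_forcing_clique_template _ (1 - 2 * tau R) (tau R) (tau R)); lra.
Qed.

Lemma not_forcing_small_a2 a1 a2 a3 : a3 <= a2 -> a2 < 1 / 4 -> ~ forcing_triple a1 a2 a3.
Proof.
move=> a32 small /forcing_triple_rev.
by apply: (@not_forcing_clique_template _ 0 (1 / 2) (1 / 2)); lra.
Qed.

Lemma not_forcing_small_sum a1 a2 a3 : 0 <= a1 <= 1 -> 0 <= a2 -> a3 <= a2 ->
  a1 + a2 < 1 -> ~ forcing_triple a1 a2 a3.
Proof.
move=> /andP[a1_ge0 a1_le1] a2_ge0 a32 small /forcing_triple_rev.
pose m := (a2 + 1 - a1) / 2.
have m_ge0 : 0 <= m by rewrite /m; lra.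
have sqrt_m : Num.sqrt m ^+ 2 = m by rewrite sqr_sqrtr.
have sqrt_m_le1 : Num.sqrt m <= 1 by rewrite -sqrtr1 ler_sqrt // /m; lra.
apply: (@not_forcing_clique_template _ (Num.sqrt m) 0 0); rewrite ?sqrt_m ?sqrtr_ge0 //.
all: rewrite /m; lra.
Qed.

Lemma not_forcing_boundary a1 a2 a3 x y : 0 <= x -> 0 <= y -> x + y <= 1 ->
  2 * x ^+ 2 + (1 - x - y) ^+ 2 < 1 ->
  a1 = x ^+ 2 + y ^+ 2 -> a2 = x ^+ 2 + (1 - x - y) ^+ 2 -> a3 <= a2 ->
  1 / 4 <= a2 -> 1 <= a1 + a2 -> ~ forcing_triple a1 a2 a3.
Proof.
move=> x0 y0 xy small -> -> a32 quarter big; set z := 1 - x - y in small a32 quarter big.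
have xyz : x + y + z = 1 by rewrite /z; ring.
have z0 : 0 <= z by rewrite /z; lra.
have dom := two_parts_le_dominant x0 y0 z0 xyz small quarter big.
have [x' [y' [z' [x'0 y'0 z'0 sum' [gain1 gain2 gain3]]]]] :=
  perturb_dominant y0 z0 xyz small dom.
by apply: (not_forcing_clique_template x'0 y'0 z'0 sum' gain1 gain2); right; lra.
Qed.

End Alternatives.

Theorem mainTheorem4 (R : realType) (a1 a2 a3 : R) :
  0 <= a1 <= 1 -> 0 <= a2 <= 1 -> 0 <= a3 <= 1 ->
  a1 >= a2 -> a2 >= a3 ->
  [\/ a1 < (1 + tau R ^+ 2) / 2,
      a2 < 1 / 4,
      a1 + a2 < 1
    | exists x y : R, [/\ 0 <= x, 0 <= y, x + y <= 1,
        2 * x ^+ 2 + (1 - x - y) ^+ 2 < 1 &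
        a1 = x ^+ 2 + y ^+ 2 /\ a2 = x ^+ 2 + (1 - x - y) ^+ 2]] ->
  ~ forcing_triple a1 a2 a3.
Proof.
move=> a1_01 /andP[a2_ge0 _] _ a21 a32.
case=> [small_a1 | small_a2 | small_sum | [x [y [x0 y0 xy small [a1E a2E]]]]].
- by apply: not_forcing_small_a1 => //; apply/andP.
- exact: not_forcing_small_a2.
- exact: not_forcing_small_sum.
have [small_sum|big] := ltP (a1 + a2) 1; first exact: not_forcing_small_sum.
have [small_a2|quarter] := ltP a2 (1 / 4); first exact: not_forcing_small_a2.
exact: not_forcing_boundary x0 y0 xy small a1E a2E a32 quarter big.
Qed.
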